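(* For $i=1,2$, let $G_i$ be an $m_i$-$\gamma_t$-critical graph of order $\Delta(G_i)+m_i$ with $\delta(G_i)\ge 2$, and let $v_i\in V(G_i)$ be a vertex of maximum degree $\Delta(G_i)$. Suppose that for each $i$, every connected component of the induced subgraph $G_i[V(G_i)\setminus N[v_i]]$ is isomorphic to the path $P_2$. Then the vertex amalgamation $G$ of $G_1$ and $G_2$ at $v_1$ and $v_2$ is an $(m_1+m_2-1)$-$\gamma_t$-critical graph of order $\Delta(G)+m_1+m_2-1$, where $\Delta(G)=\Delta(G_1)+\Delta(G_2)$.
   Context: All graphs are finite and simple. $N(x)$ is the neighborhood of $x$, $N[x]=N(x)\cup\{x\}$, $G[X]$ the subgraph induced by $X$, $P_k$ the path on $k$ vertices. A set $S\subseteq V(G)$ is a total dominating set if every vertex of $G$ is adjacent to some vertex of $S$; $\gamma_t(G)$ is the minimum size of such a set. A leaf is a vertex of degree one. A graph $G$ with no isolated vertex is $\gamma_t$-critical if for every vertex $v$ not adjacent to a leaf, $\gamma_t(G-v)<\gamma_t(G)$; it is $m$-$\gamma_t$-critical if moreover $\gamma_t(G)=m$. The vertex amalgamation of $G_1$ and $G_2$ at $v_1\in V(G_1)$, $v_2\in V(G_2)$ is the graph with vertex set $(V(G_1)\setminus\{v_1\})\cup(V(G_2)\setminus\{v_2\})\cup\{v\}$ ($v$ a new vertex, the vertex sets of $G_1,G_2$ disjoint) and edge set $E(G_1-v_1)\cup E(G_2-v_2)\cup\{vu: v_1u\in E(G_1)\}\cup\{vw: v_2w\in E(G_2)\}$.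 *)

From HB Require Import structures.
From mathcomp Require Import all_boot.
Set Implicit Arguments. Unset Strict Implicit. Unset Printing Implicit Defensive.

Record graph := Graph {
  vtx :> finType;
  adj : rel vtx;
  adj_sym : symmetric adj;
  adj_irr : irreflexive adj }.

Section GraphDefs.
Variable G : graph.

Definition nbh (x : G) : {set G} := [set y | adj x y].
Definition cnbh (x : G) : {set G} := x |: nbh x.
Definition deg (x : G) : nat := #|nbh x|.
Definition maxdeg : nat := \max_(x : G) deg x.
Definition is_leaf (x : G) : bool := deg x == 1.

Definition tds_in (A S : {set G}) : bool :=
  (S \subset A) && [forall x in A, [exists y in S, adj x y]].

(* gamma_t(G[A]); the default value #|A|.+1 ("infinity") is only reached
   when G[A] has an isolated vertex, i.e. has no total dominating set. *)
Definition gammat_in (A : {set G}) : nat :=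
  \big[minn/#|A|.+1]_(S : {set G} | tds_in A S) #|S|.

Definition gammat : nat := gammat_in setT.

Definition no_isolated : Prop := forall x : G, 0 < deg x.

Definition gt_critical : Prop :=
  no_isolated /\
  forall v : G, (forall u : G, adj v u -> ~~ is_leaf u) ->
    gammat_in [set~ v] < gammat.

Definition m_gt_critical (m : nat) : Prop := gt_critical /\ gammat = m.

Definition induced_adj (A : {set G}) : rel G :=
  [rel x y | [&& x \in A, y \in A & adj x y]].
Definition component_in (A : {set G}) (x : G) : {set G} :=
  [set y | connect (induced_adj A) x y].

(* every connected component of G[A] is isomorphic to P_2: the component
   of each x in A is {x, y} with x y an edge (a connected graph on two
   vertices is P_2). *)
Definition components_P2 (A : {set G}) : Prop :=
  forall x, x \in A -> exists y, adj x y /\ component_in A x = [set x; y].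

End GraphDefs.

(* Vertex amalgamation of G1 and G2 at v1, v2: vertex set
   (V(G1)\{v1}) + (V(G2)\{v2}) + {v}, with v represented by None. *)
Section Amalgamation.
Variables (G1 G2 : graph) (v1 : G1) (v2 : G2).

Definition amal_vtx : finType :=
  option ({x : G1 | x != v1} + {x : G2 | x != v2}).

Definition amal_adj : rel amal_vtx := fun a b =>
  match a, b with
  | Some (inl x), Some (inl y) => adj (val x) (val y)
  | Some (inr x), Some (inr y) => adj (val x) (val y)
  | None, Some (inl y) => adj v1 (val y)
  | None, Some (inr y) => adj v2 (val y)
  | Some (inl x), None => adj v1 (val x)
  | Some (inr x), None => adj v2 (val x)
  | _, _ => false
  end.

Lemma amal_adj_sym : symmetric amal_adj.
Proof.
move=> [[x|x]|] [[y|y]|] //=; rewrite ?(adj_sym (val x)) ?(adj_sym (val y)) //.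
Qed.

Lemma amal_adj_irr : irreflexive amal_adj.
Proof. by move=> [[x|x]|] //=; rewrite adj_irr. Qed.

Definition amalgamation : graph := Graph amal_adj_sym amal_adj_irr.
End Amalgamation.

From HB Require Import structures.
From mathcomp Require Import all_boot zify.
Set Implicit Arguments. Unset Strict Implicit. Unset Printing Implicit Defensive.

(* A total dominating set S of the amalgamation G splits into its traces S1
   and S2 on the two summands, which share at most the centre v.  Some side,
   say G1, dominates v, so S1 totally dominates G1 and |S1| >= m1.  On the
   other side each vertex of V(G2) - N[v2] can only be dominated from inside
   its P_2-component, so S2 contains all m2 - 1 of them, and v2 as well when
   v lies in S; hence |S| >= m1 + m2 - 1.  Conversely V(G1) - N[v1], the
   centre and a total dominating set of G2 - x, for a neighbour x of v2,
   totally dominate G; and total dominating sets of G1 - a and G2 - v2 glue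
   into one of G - a with at most m1 + m2 - 2 vertices.  Orders and degrees
   add up because N(v) is the disjoint union of N(v1) and N(v2). *)

(* Lets [big_rem_AC] split the minimum defining [gammat_in]. *)
HB.instance Definition _ := SemiGroup.isComLaw.Build nat minn minnA minnC.

Section TotalDomination.
Variable G : graph.
Implicit Types (A S T : {set G}) (x y z : G).

Lemma tdsP A S :
  reflect (S \subset A /\ forall x, x \in A -> exists2 y, y \in S & adj x y)
          (tds_in A S).
Proof.
apply: (iffP andP) => [[sSA /forall_inP domS]|[sSA domS]]; split=> //.
  by move=> x /domS /exists_inP[y yS xy]; exists y.
by apply/forall_inP => x /domS[y yS xy]; apply/exists_inP; exists y.
Qed.

Lemma gammat_in_le A S : tds_in A S -> gammat_in A <= #|S|.
Proof.
by move=> tdsS; rewrite /gammat_in (big_rem_AC _ _ _ _ (mem_index_enum S)) tdsS geq_minl.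
Qed.

Lemma gammat_in_ge A k :
  (forall S, tds_in A S -> k <= #|S|) -> k <= #|A|.+1 -> k <= gammat_in A.
Proof.
move=> leS leA; rewrite /gammat_in.
by elim/big_ind: _ => // m n; rewrite leq_min => -> ->.
Qed.

Lemma gammat_in_lt A k :
  gammat_in A < k -> k <= #|A|.+1 -> exists2 S, tds_in A S & #|S| < k.
Proof.
move=> ltk leA; apply/exists_inP; apply: contraLR ltk => /exists_inPn small.
by rewrite -leqNgt gammat_in_ge // => S /small; rewrite -leqNgt.
Qed.

Lemma components_P2_partner A :
  components_P2 A -> forall x, x \in A -> exists2 y, y \in A & adj x y.
Proof.
move=> P2A x xA; have [y [xy compx]] := P2A x xA; exists y => //.
have : y \in component_in A x by rewrite compx !inE eqxx orbT.
rewrite inE => /connectP[p]; case/lastP: p => [_ -> //|p z].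
by rewrite rcons_path last_rcons => /andP[_ /and3P[_ zA _]] ->.
Qed.

Lemma components_P2_walk A :
  components_P2 A -> forall x y z, x \in A -> y \in A -> z \in A ->
  adj x y -> adj y z -> z = x.
Proof.
move=> P2A x y z xA yA zA xy yz; have [w [_ compx]] := P2A x xA.
have xAy : induced_adj A x y by exact/and3P.
have yAz : induced_adj A y z by exact/and3P.
have : y \in component_in A x by rewrite inE connect1.
have : z \in component_in A x.
  by rewrite inE (connect_trans (connect1 xAy) (connect1 yAz)).
rewrite compx !inE => /pred2P[-> // | zw] /pred2P[yx | yw].
  by rewrite yx adj_irr in xy.
by rewrite yw -zw adj_irr in yz.
Qed.

Lemma card_compl_cnbh x : #|~: cnbh x| = #|G| - (deg x).+1.
Proof. by rewrite cardsCs setCK cardsU1 inE adj_irr. Qed.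

Lemma compl_cnbh_dominates x : components_P2 (~: cnbh x) ->
  forall y, y != x -> exists2 z, z \in x |: ~: cnbh x & adj y z.
Proof.
move=> P2x y yx; have [xy | nxy] := boolP (adj x y).
  by exists x; rewrite ?setU11 // adj_sym.
have yR : y \in ~: cnbh x by rewrite !inE negb_or yx.
by have [z zR yz] := components_P2_partner P2x yR; exists z; rewrite // setU1r.
Qed.

(* The dominator of a vertex of V - N[x] lies in its P_2-component, and so
   does the dominator of that dominator. *)
Lemma compl_cnbh_sub_dominating x T : components_P2 (~: cnbh x) ->
  (forall y, y != x -> exists2 z, z \in T & adj y z) ->
  (forall z, z \in T -> ~~ adj x z) -> ~: cnbh x \subset T.
Proof.
move=> P2x domT avoidT; apply/subsetP => y yR.
have outR z : z \in ~: cnbh x -> z != x /\ ~~ adj x z.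
  by rewrite !inE negb_or => /andP[].
have inR z w : z \in ~: cnbh x -> w \in T -> adj z w -> w \in ~: cnbh x.
  move=> /outR[_ nxz] wT zw; rewrite !inE negb_or avoidT // andbT.
  by apply: contraNneq nxz => <-; rewrite adj_sym.
have [z zT yz] := domT y (outR y yR).1.
have zR := inR _ _ yR zT yz.
have [w wT zw] := domT z (outR z zR).1.
by rewrite -(components_P2_walk P2x yR zR (inR _ _ zR wT zw) yz zw).
Qed.

End TotalDomination.

(* [K] is the vertex amalgamation of [H1] and [H2] at [v1] and [v2], seen
   through the embeddings [f1] and [f2] of the summands.  The description is
   symmetric ([amalgam_maps_sym]), so one-sided lemmas serve both summands. *)
Record amalgam_maps (K H1 H2 : graph) (v1 : H1) (v2 : H2)
    (f1 : H1 -> K) (f2 : H2 -> K) : Prop := AmalgamMaps {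
  amal_inj1 : injective f1;
  amal_inj2 : injective f2;
  amal_adj1 : {mono f1 : a b / adj a b};
  amal_adj2 : {mono f2 : a b / adj a b};
  amal_glue : forall a b, (f1 a == f2 b) = (a == v1) && (b == v2);
  amal_cross : forall a b, adj (f1 a) (f2 b) -> (a == v1) || (b == v2);
  amal_cover : forall y, (exists a, y = f1 a) \/ (exists b, y = f2 b) }.

Lemma amalgam_maps_sym (K H1 H2 : graph) (v1 : H1) (v2 : H2) f1 f2 :
  @amalgam_maps K H1 H2 v1 v2 f1 f2 -> amalgam_maps v2 v1 f2 f1.
Proof.
case=> inj1 inj2 adj1 adj2 glue cross cover; split=> //.
- by move=> b a; rewrite eq_sym glue andbC.
- by move=> b a; rewrite adj_sym orbC; apply: cross.
- by move=> y; case: (cover y); [right | left].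
Qed.

Section AmalgamSide.
Variables (K H1 H2 : graph) (v1 : H1) (v2 : H2) (f1 : H1 -> K) (f2 : H2 -> K).
Hypothesis amal : amalgam_maps v1 v2 f1 f2.
Implicit Types (S : {set K}) (a : H1) (b : H2).

Lemma amal_center : f1 v1 = f2 v2.
Proof. by apply/eqP; rewrite (amal_glue amal) !eqxx. Qed.

Lemma amal_image_eq a b : f1 a = f2 b -> a = v1 /\ b = v2.
Proof. by move/eqP; rewrite (amal_glue amal) => /andP[/eqP-> /eqP->]. Qed.

Lemma nbh_amal1 a : a != v1 -> nbh (f1 a) = f1 @: nbh a.
Proof.
move=> av1; apply/setP => y; rewrite inE.
have mem1 c : (f1 c \in f1 @: nbh a) = adj a c.
  by rewrite (mem_imset _ _ (amal_inj1 amal)) inE.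
case: (amal_cover amal y) => [[c ->]|[b ->]]; first by rewrite (amal_adj1 amal) mem1.
have [-> | bv2] := eqVneq b v2; first by rewrite -amal_center (amal_adj1 amal) mem1.
apply/idP/imsetP => [/(amal_cross amal) | [c _ /esym/amal_image_eq[_ /eqP]]].
  by rewrite (negbTE av1) (negbTE bv2).
by rewrite (negbTE bv2).
Qed.

Lemma deg_amal1 a : a != v1 -> deg (f1 a) = deg a.
Proof. by move=> av1; rewrite /deg nbh_amal1 // (card_imset _ (amal_inj1 amal)). Qed.

Lemma amal_image1_notin_nbh2 a : f1 a \notin f2 @: nbh v2.
Proof. by apply/imsetP => -[b bN /amal_image_eq[_ eb]]; rewrite eb inE adj_irr in bN. Qed.

Lemma dominated_amal1 S a : a != v1 ->
  (exists2 y, y \in S & adj (f1 a) y) -> exists2 b, b \in f1 @^-1: S & adj a b.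
Proof.
move=> av1 [y yS ay]; have : y \in f1 @: nbh a by rewrite -nbh_amal1 // inE.
by case/imsetP=> b; rewrite inE => ab eyb; exists b; rewrite // inE -eyb.
Qed.

Lemma tds_preimage_amal1 S : tds_in setT S ->
  (exists2 b, b \in f1 @^-1: S & adj v1 b) -> tds_in setT (f1 @^-1: S).
Proof.
case/tdsP=> _ domS domv1; apply/tdsP; split=> [|a _]; first exact: subsetT.
have [-> // | av1] := eqVneq a v1.
exact: dominated_amal1 av1 (domS _ (in_setT _)).
Qed.

Lemma card_preimage_amal1 S : components_P2 (~: cnbh v1) -> tds_in setT S ->
  #|~: cnbh v1| < gammat H1 -> #|~: cnbh v1| + (f1 v1 \in S) <= #|f1 @^-1: S|.
Proof.
move=> P2v1 tdsS ltR; have [_ domS] := tdsP _ _ tdsS.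
have [/exists_inP domv1 | /exists_inPn ndomv1] :=
  boolP [exists b in f1 @^-1: S, adj v1 b].
  move: ltR (gammat_in_le (tds_preimage_amal1 tdsS domv1)); rewrite /gammat.
  by case: (f1 v1 \in S); lia.
have sub : ~: cnbh v1 \subset f1 @^-1: S.
  apply: compl_cnbh_sub_dominating P2v1 _ _ => [a av1 | b /ndomv1 //].
  exact: dominated_amal1 av1 (domS _ (in_setT _)).
have [v1S | _] := boolP (f1 v1 \in S); last by rewrite addn0 subset_leq_card.
have v1R : v1 \notin ~: cnbh v1 by rewrite !inE eqxx.
have : v1 |: ~: cnbh v1 \subset f1 @^-1: S by rewrite subUset sub1set inE v1S.
by move/subset_leq_card; rewrite cardsU1 v1R addnC.
Qed.

End AmalgamSide.

Section Amalgam.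
Variables (K H1 H2 : graph) (v1 : H1) (v2 : H2) (f1 : H1 -> K) (f2 : H2 -> K).
Hypothesis amal : amalgam_maps v1 v2 f1 f2.
Let amal' := amalgam_maps_sym amal.
Implicit Types (S : {set K}) (a : H1) (b : H2).

Lemma nbh_amal_center : nbh (f1 v1) = f1 @: nbh v1 :|: f2 @: nbh v2.
Proof.
apply/setP => y; rewrite inE in_setU.
case: (amal_cover amal y) => [[a ->]|[b ->]].
  by rewrite (amal_adj1 amal) (mem_imset _ _ (amal_inj1 amal)) inE
    (negbTE (amal_image1_notin_nbh2 amal a)) orbF.
by rewrite (amal_center amal) (amal_adj2 amal) (mem_imset _ _ (amal_inj2 amal)) inE
  (negbTE (amal_image1_notin_nbh2 amal' b)).
Qed.

Lemma deg_amal_center : deg (f1 v1) = deg v1 + deg v2.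
Proof.
have disj : f1 @: nbh v1 :&: f2 @: nbh v2 = set0.
  apply/setP => y; rewrite !inE; apply/andP => -[/imsetP[a _ ->]].
  by rewrite (negbTE (amal_image1_notin_nbh2 amal a)).
rewrite /deg nbh_amal_center cardsU disj cards0 subn0.
by rewrite (card_imset _ (amal_inj1 amal)) (card_imset _ (amal_inj2 amal)).
Qed.

Lemma card_amal : #|K| = #|H1| + #|H2| - 1.
Proof.
have cover : [set: K] = f1 @: setT :|: f2 @: setT.
  apply/setP => y; rewrite !inE; apply/esym/orP.
  by case: (amal_cover amal y) => [[a ->]|[b ->]]; [left | right]; apply: imset_f.
have glue : f1 @: setT :&: f2 @: setT = [set f1 v1].
  apply/setP => y; rewrite !inE; apply/andP/eqP => [[/imsetP[a _ ->] /imsetP[b _]] | ->].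
    by case/(amal_image_eq amal) => ->.
  by rewrite imset_f //= (amal_center amal) imset_f.
rewrite -cardsT cover cardsU glue cards1.
by rewrite (card_imset _ (amal_inj1 amal)) (card_imset _ (amal_inj2 amal)) !cardsT.
Qed.

Lemma maxdeg_amal :
  deg v1 = maxdeg H1 -> deg v2 = maxdeg H2 -> maxdeg K = maxdeg H1 + maxdeg H2.
Proof.
move=> maxv1 maxv2.
have le_center (y : K) : deg y <= deg (f1 v1).
  rewrite deg_amal_center maxv1 maxv2.
  case: (amal_cover amal y) => [[a ->]|[b ->]].
    have [-> | av1] := eqVneq a v1; first by rewrite deg_amal_center maxv1 maxv2.
    by rewrite (deg_amal1 amal) // (leq_trans (leq_bigmax a)) ?leq_addr.
  have [-> | bv2] := eqVneq b v2.
    by rewrite -(amal_center amal) deg_amal_center maxv1 maxv2.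
  by rewrite (deg_amal1 amal') // (leq_trans (leq_bigmax b)) ?leq_addl.
apply/eqP; rewrite -maxv1 -maxv2 -deg_amal_center eqn_leq leq_bigmax andbT.
exact/bigmax_leqP.
Qed.

Lemma deg_amal_ge k :
  (forall a, k <= deg a) -> (forall b, k <= deg b) -> forall y : K, k <= deg y.
Proof.
move=> ge1 ge2 y; have center : k <= deg (f1 v1).
  by rewrite deg_amal_center (leq_trans (ge1 v1)) ?leq_addr.
case: (amal_cover amal y) => [[a ->]|[b ->]].
  by have [-> // | av1] := eqVneq a v1; rewrite (deg_amal1 amal).
have [-> | bv2] := eqVneq b v2; first by rewrite -(amal_center amal).
by rewrite (deg_amal1 amal').
Qed.

Lemma tds_amal (A S : {set K}) : S \subset A ->
  (forall a, a != v1 -> f1 a \in A -> exists2 c, c \in f1 @^-1: S & adj a c) ->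
  (forall b, b != v2 -> f2 b \in A -> exists2 c, c \in f2 @^-1: S & adj b c) ->
  (f1 v1 \in A -> (exists2 c, c \in f1 @^-1: S & adj v1 c) \/
                  (exists2 c, c \in f2 @^-1: S & adj v2 c)) ->
  tds_in A S.
Proof.
move=> sSA dom1 dom2 domc; apply/tdsP; split=> // y yA.
have lift1 a : (exists2 c, c \in f1 @^-1: S & adj a c) ->
    exists2 z, z \in S & adj (f1 a) z.
  by case=> c; rewrite inE => cS ac; exists (f1 c); rewrite ?(amal_adj1 amal).
have lift2 b : (exists2 c, c \in f2 @^-1: S & adj b c) ->
    exists2 z, z \in S & adj (f2 b) z.
  by case=> c; rewrite inE => cS bc; exists (f2 c); rewrite ?(amal_adj2 amal).
have center : f1 v1 \in A -> exists2 z, z \in S & adj (f1 v1) z.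
  move/domc => [/lift1 // | /lift2]; by rewrite (amal_center amal).
case: (amal_cover amal y) yA => [[a ->]|[b ->]].
  by have [-> | av1] := eqVneq a v1; [exact: center | move/(dom1 _ av1)/lift1].
have [-> | bv2] := eqVneq b v2; last by move/(dom2 _ bv2)/lift2.
by rewrite -(amal_center amal).
Qed.

Lemma card_preimages_amal S :
  #|f1 @^-1: S| + #|f2 @^-1: S| <= #|S| + (f1 v1 \in S).
Proof.
rewrite -(card_imset _ (amal_inj1 amal)) -(card_imset _ (amal_inj2 amal)) -cardsUI.
apply: leq_add; first by rewrite subset_leq_card // subUset !sub_imset_pre !subxx.
have sub : f1 @: (f1 @^-1: S) :&: f2 @: (f2 @^-1: S) \subset S :&: [set f1 v1].
  apply/subsetP => y /setIP[/imsetP[a aS ->] /imsetP[b _ /(amal_image_eq amal)[ea _]]].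
  by move: aS; rewrite !inE ea eqxx andbT.
have [_ | nv1S] := boolP (f1 v1 \in S).
  apply: leq_trans (subset_leq_card sub) _.
  by rewrite (leq_trans (subset_leq_card (subsetIr _ _))) ?cards1.
rewrite leqn0 cards_eq0 -subset0 (subset_trans sub) //.
by apply/subsetP => y /setIP[yS /set1P eyv]; rewrite -eyv yS in nv1S.
Qed.

Lemma dominated_amal_center S : (exists2 y, y \in S & adj (f1 v1) y) ->
  (exists2 a, a \in f1 @^-1: S & adj v1 a) \/ (exists2 b, b \in f2 @^-1: S & adj v2 b).
Proof.
case=> y yS cy; have : y \in nbh (f1 v1) by rewrite inE.
rewrite nbh_amal_center => /setUP[] /imsetP[c cN ey]; [left | right];
  by exists c; [rewrite inE -ey | rewrite inE in cN].
Qed.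

Lemma card_tds_amal_gt S :
  components_P2 (~: cnbh v1) -> components_P2 (~: cnbh v2) ->
  #|~: cnbh v1| < gammat H1 -> #|~: cnbh v2| < gammat H2 ->
  tds_in setT S -> #|~: cnbh v1| + #|~: cnbh v2| < #|S|.
Proof.
move=> P2v1 P2v2 ltR1 ltR2 tdsS; have [_ domS] := tdsP _ _ tdsS.
have ge1 := card_preimage_amal1 amal P2v1 tdsS ltR1.
have ge2 := card_preimage_amal1 amal' P2v2 tdsS ltR2.
have sum := card_preimages_amal S; rewrite -(amal_center amal) in ge2.
case: (dominated_amal_center (domS _ (in_setT (f1 v1)))) => [dom1 | dom2].
  have := gammat_in_le (tds_preimage_amal1 amal tdsS dom1).
  by move: ltR1; rewrite /gammat; case: (f1 v1 \in S) ge1 ge2 sum; lia.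
have := gammat_in_le (tds_preimage_amal1 amal' tdsS dom2).
by move: ltR2; rewrite /gammat; case: (f1 v1 \in S) ge1 ge2 sum; lia.
Qed.

(* V(H1) - N[v1] together with the centre, plus a total dominating set of
   H2 - x for a neighbour x of v2 (which the centre dominates). *)
Lemma gammat_amal_le x T : components_P2 (~: cnbh v1) -> adj v2 x ->
  tds_in [set~ x] T -> gammat K <= #|~: cnbh v1| + #|T|.+1.
Proof.
move=> P2v1 v2x /tdsP[_ domT].
set S := f1 @: (v1 |: ~: cnbh v1) :|: f2 @: T.
have sub1 : v1 |: ~: cnbh v1 \subset f1 @^-1: S by rewrite -sub_imset_pre subsetUl.
have sub2 : v2 |: T \subset f2 @^-1: S.
  rewrite subUset sub1set inE -(amal_center amal) -sub_imset_pre subsetUr andbT.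
  by rewrite in_setU imset_f ?setU11.
have domT2 b : b != x -> exists2 c, c \in f2 @^-1: S & adj b c.
  move=> bx; have [|c cT bc] := domT b; first by rewrite !inE.
  by exists c; rewrite ?(subsetP sub2) ?setU1r.
apply: leq_trans (gammat_in_le (S := S) _) _.
  apply: tds_amal (subsetT _) _ _ _ => [a av1 _ | b bv2 _ | _].
  - by have [c cR ac] := compl_cnbh_dominates P2v1 av1; exists c; rewrite ?(subsetP sub1).
  - have [-> | bx] := eqVneq b x; last exact: domT2.
    by exists v2; rewrite ?(subsetP sub2) ?setU11 // adj_sym.
  - by right; apply: domT2; apply: contraTneq v2x => ->; rewrite adj_irr.
have := cardsU (f1 @: (v1 |: ~: cnbh v1)) (f2 @: T).
have := leq_imset_card f1 (v1 |: ~: cnbh v1); have := leq_imset_card f2 T.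
by rewrite cardsU1 /S; lia.
Qed.

Lemma gammat_in_amal_minus1 a T1 T2 : tds_in [set~ a] T1 -> tds_in [set~ v2] T2 ->
  gammat_in [set~ f1 a] <= #|T1| + #|T2|.
Proof.
move=> /tdsP[/subsetP sT1 domT1] /tdsP[/subsetP sT2 domT2].
set S := f1 @: T1 :|: f2 @: T2.
have sub1 : T1 \subset f1 @^-1: S by rewrite -sub_imset_pre subsetUl.
have sub2 : T2 \subset f2 @^-1: S by rewrite -sub_imset_pre subsetUr.
have dom1 c : c != a -> exists2 d, d \in f1 @^-1: S & adj c d.
  move=> ca; have [|d dT cd] := domT1 c; first by rewrite !inE.
  by exists d; rewrite ?(subsetP sub1).
have ne1 c : (f1 c \in [set~ f1 a]) = (c != a).
  by rewrite !inE (inj_eq (amal_inj1 amal)).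
apply: leq_trans (gammat_in_le (S := S) _) _.
  apply: tds_amal => [|c _ | b bv2 _ | ].
  - apply/subsetP => y /setUP[] /imsetP[t tT ->]; first by rewrite ne1 -in_setC1 sT1.
    rewrite !inE eq_sym (amal_glue amal).
    by move: (sT2 t tT); rewrite !inE => /negbTE->; rewrite andbF.
  - by rewrite ne1; apply: dom1.
  - have [|d dT bd] := domT2 b; first by rewrite !inE.
    by exists d; rewrite ?(subsetP sub2).
  - by rewrite ne1 => v1a; left; apply: dom1.
have := cardsU (f1 @: T1) (f2 @: T2).
have := leq_imset_card f1 T1; have := leq_imset_card f2 T2.
by rewrite /S; lia.
Qed.

End Amalgam.

Section Amalgamation.
Variables (G1 G2 : graph) (v1 : G1) (v2 : G2).
Local Notation G := (amalgamation v1 v2).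

Definition amal_in1 (a : G1) : G :=
  if insub a : option {x | x != v1} is Some s then Some (inl s) else None.
Definition amal_in2 (b : G2) : G :=
  if insub b : option {x | x != v2} is Some s then Some (inr s) else None.

Variant amal_in1_spec a : G -> Prop :=
  | AmalIn1Center of a = v1 : amal_in1_spec a None
  | AmalIn1Side s of val s = a : amal_in1_spec a (Some (inl s)).
Variant amal_in2_spec b : G -> Prop :=
  | AmalIn2Center of b = v2 : amal_in2_spec b None
  | AmalIn2Side s of val s = b : amal_in2_spec b (Some (inr s)).

Lemma amal_in1P a : amal_in1_spec a (amal_in1 a).
Proof. by rewrite /amal_in1; case: insubP => [s _ | /negbNE/eqP]; constructor. Qed.
Lemma amal_in2P b : amal_in2_spec b (amal_in2 b).
Proof. by rewrite /amal_in2; case: insubP => [s _ | /negbNE/eqP]; constructor. Qed.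

Lemma amalgam_maps_amalgamation : amalgam_maps v1 v2 amal_in1 amal_in2.
Proof.
split.
- by move=> a a'; case: amal_in1P => [-> | s <-]; case: amal_in1P => [-> | t <-] // [->].
- by move=> b b'; case: amal_in2P => [-> | s <-]; case: amal_in2P => [-> | t <-] // [->].
- move=> a a'; case: amal_in1P => [-> | s <-]; case: amal_in1P => [-> | t <-] //=.
    by rewrite adj_irr.
  by rewrite adj_sym.
- move=> b b'; case: amal_in2P => [-> | s <-]; case: amal_in2P => [-> | t <-] //=.
    by rewrite adj_irr.
  by rewrite adj_sym.
- move=> a b; case: amal_in1P => [-> | s <-]; case: amal_in2P => [-> | t <-];
    by rewrite ?eqxx ?(negbTE (valP s)) ?(negbTE (valP t)) ?andbF.
- by move=> a b; case: amal_in1P => [-> | s <-]; case: amal_in2P => [-> | t <-];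
    rewrite ?eqxx ?orbT.
- case=> [[s | s] |]; first (by left; exists (val s); rewrite /amal_in1 valK);
    last by left; exists v1; case: amal_in1P => // s /eqP; rewrite (negbTE (valP s)).
  by right; exists (val s); rewrite /amal_in2 valK.
Qed.

End Amalgamation.

Lemma critical_tds_minus (H : graph) m : m_gt_critical H m ->
  (forall x : H, 2 <= deg x) -> m <= #|H| ->
  forall a : H, exists2 T, tds_in [set~ a] T & #|T| < m.
Proof.
move=> [[_ crit] <-] deg2 le_m a; apply: gammat_in_lt.
  by apply: crit => u _; rewrite /is_leaf neq_ltn deg2 orbT.
by rewrite cardsC1 prednK //; apply/card_gt0P; exists a.
Qed.

Theorem mainTheorem2 (G1 G2 : graph) (m1 m2 : nat) (v1 : G1) (v2 : G2) :
  m_gt_critical G1 m1 -> #|G1| = maxdeg G1 + m1 ->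
  (forall x : G1, 2 <= deg x) -> deg v1 = maxdeg G1 ->
  components_P2 (~: cnbh v1) ->
  m_gt_critical G2 m2 -> #|G2| = maxdeg G2 + m2 ->
  (forall x : G2, 2 <= deg x) -> deg v2 = maxdeg G2 ->
  components_P2 (~: cnbh v2) ->
  m_gt_critical (amalgamation v1 v2) (m1 + m2 - 1) /\
  #|amalgamation v1 v2| = maxdeg (amalgamation v1 v2) + (m1 + m2 - 1) /\
  maxdeg (amalgamation v1 v2) = maxdeg G1 + maxdeg G2.
Proof.
move=> crit1 card1 deg1 max1 P2v1 crit2 card2 deg2 max2 P2v2.
have amal := amalgam_maps_amalgamation v1 v2.
have small1 : forall a : G1, exists2 T, tds_in [set~ a] T & #|T| < m1.
  by apply: critical_tds_minus; rewrite ?card1 ?leq_addl.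
have small2 : forall b : G2, exists2 T, tds_in [set~ b] T & #|T| < m2.
  by apply: critical_tds_minus; rewrite ?card2 ?leq_addl.
have R1 : #|~: cnbh v1| = m1 - 1 by rewrite card_compl_cnbh card1 max1; lia.
have R2 : #|~: cnbh v2| = m2 - 1 by rewrite card_compl_cnbh card2 max2; lia.
have [T1 tdsT1 ltT1] := small1 v1; have [T2 tdsT2 ltT2] := small2 v2.
have [x] : exists x, x \in nbh v2 by apply/card_gt0P; apply: leq_trans (deg2 v2).
rewrite inE => v2x; have [Tx tdsTx ltTx] := small2 x.
have [[_ g1] [_ g2]] := (crit1, crit2).
have gammatK : gammat (amalgamation v1 v2) = m1 + m2 - 1.
  apply/eqP; rewrite eqn_leq.
  rewrite (leq_trans (gammat_amal_le amal P2v1 v2x tdsTx)) /=; last lia.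
  apply: gammat_in_ge => [S tdsS | ]; last by rewrite cardsT (card_amal amal); lia.
  by have := card_tds_amal_gt amal P2v1 P2v2 _ _ tdsS; rewrite R1 R2 g1 g2; lia.
split; [split; [split |] | split] => //.
- by move=> y; apply: leq_trans (deg_amal_ge amal deg1 deg2 y).
- move=> y _; rewrite gammatK; case: (amal_cover amal y) => [[a ->]|[b ->]].
    have [T tdsT ltT] := small1 a.
    by have := gammat_in_amal_minus1 amal tdsT tdsT2; lia.
  have [T tdsT ltT] := small2 b.
  by have := gammat_in_amal_minus1 (amalgam_maps_sym amal) tdsT tdsT1; lia.
- by rewrite (card_amal amal) (maxdeg_amal amal) // card1 card2; lia.
- exact: maxdeg_amal amal max1 max2.
Qed.
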